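(* Let $\mu$ be a singular cardinal with $\operatorname{cf}(\mu)=\theta$, and suppose $\mathfrak{d}^*_\mu=\kappa$. Then $\mathfrak{d}_\mu=\kappa$.
   Context: For $f,g\in{}^\mu\mu$, $f\le^* g$ means $|\{\beta<\mu:f(\beta)>g(\beta)\}|<\mu$ (size less than $\mu$, not merely bounded), and $\mathfrak{d}_\mu$ is the minimal cardinality of a family $\mathcal{D}\subseteq{}^\mu\mu$ such that every $f\in{}^\mu\mu$ is $\le^*$ some member of $\mathcal{D}$. For $f,g\in{}^\mu\theta$, $f<^* g$ means $|\{\beta<\mu:f(\beta)\ge g(\beta)\}|<\mu$, and $\mathfrak{d}^*_\mu$ is the minimal cardinality of a family $\mathcal{D}\subseteq{}^\mu\theta$ such that every $f\in{}^\mu\theta$ is $<^*$ some member of $\mathcal{D}$. *)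

(* Cardinals are modelled as types (cardinality = the type up to
   bijection); the cardinals mu and theta are modelled as well-ordered types that
   are initial ordinals (the von Neumann cardinal as an ordinal). *)
From Stdlib Require Import Classical.

Definition injective {A B : Type} (f : A -> B) : Prop :=
  forall x y, f x = f y -> x = y.

Definition card_le (A B : Type) : Prop := exists f : A -> B, injective f.

Definition card_eq (A B : Type) : Prop :=
  exists (f : A -> B) (g : B -> A),
    (forall x, g (f x) = x) /\ (forall y, f (g y) = y).

Definition well_order {A : Type} (lt : A -> A -> Prop) : Prop :=
  well_founded lt /\
  (forall x, ~ lt x x) /\
  (forall x y z, lt x y -> lt y z -> lt x z) /\
  (forall x y, lt x y \/ x = y \/ lt y x).

Definition leo {A : Type} (lt : A -> A -> Prop) (x y : A) : Prop := lt x y \/ x = y.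

Definition is_cardinal {A : Type} (lt : A -> A -> Prop) : Prop :=
  well_order lt /\ forall a : A, ~ card_le A {x : A | lt x a}.

Definition cofinal {M : Type} (lt : M -> M -> Prop) (X : M -> Prop) : Prop :=
  forall m, exists x, X x /\ leo lt m x.

Definition cof_is {M : Type} (lt : M -> M -> Prop) (T : Type) : Prop :=
  (exists X, cofinal lt X /\ card_eq {x : M | X x} T) /\
  (forall X, cofinal lt X -> card_le T {x : M | X x}).

Definition singular_with_cof {M : Type} (lt : M -> M -> Prop) (T : Type) : Prop :=
  card_le nat M /\ cof_is lt T /\ card_le T M /\ ~ card_le M T.

Definition small {M : Type} (A : M -> Prop) : Prop := ~ card_le M {b : M | A b}.

Definition le_star {M : Type} (ltM : M -> M -> Prop) (f g : M -> M) : Prop :=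
  small (fun b => ltM (g b) (f b)).

Definition lt_star {M T : Type} (ltT : T -> T -> Prop) (f g : M -> T) : Prop :=
  small (fun b : M => leo ltT (g b) (f b)).

Definition dominating_mu {M : Type} (ltM : M -> M -> Prop) (D : (M -> M) -> Prop) : Prop :=
  forall f : M -> M, exists g, D g /\ le_star ltM f g.

Definition dominating_star {M T : Type} (ltT : T -> T -> Prop) (D : (M -> T) -> Prop) : Prop :=
  forall f : M -> T, exists g, D g /\ lt_star ltT f g.

Definition min_card_is {F : Type} (P : (F -> Prop) -> Prop) (K : Type) : Prop :=
  (exists D, P D /\ card_eq {x : F | D x} K) /\
  (forall D, P D -> card_le K {x : F | D x}).

Definition d_mu_is {M : Type} (ltM : M -> M -> Prop) (K : Type) : Prop :=
  min_card_is (dominating_mu ltM) K.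

Definition d_star_is {M T : Type} (ltT : T -> T -> Prop) (K : Type) : Prop :=
  min_card_is (F := M -> T) (dominating_star ltT) K.

(* Fix a nondecreasing map nu : theta -> mu with unbounded range (a cofinal sequence in the
   singular cardinal mu) and a map c : mu -> theta with x < nu (c x) for all x.  Composing
   with nu turns a <*-dominating family in ^mu theta into a <=*-dominating family in ^mu mu of
   no larger size, and composing with c does the converse.  Hence the two dominating numbers
   bound each other, and Cantor-Schroeder-Bernstein turns this into an exact cardinality. *)
From Stdlib Require Import Classical ClassicalEpsilon ProofIrrelevance.

Lemma sig_eq {A} (P : A -> Prop) (x y : {a | P a}) : proj1_sig x = proj1_sig y -> x = y.
Proof. apply eq_sig_hprop. intros; apply proof_irrelevance. Qed.

Lemma card_le_trans A B C : card_le A B -> card_le B C -> card_le A C.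
Proof. intros [f Hf] [g Hg]. exists (fun x => g (f x)). intros x y E. apply Hf, Hg, E. Qed.

Lemma card_le_of_card_eq A B : card_eq A B -> card_le A B.
Proof.
  intros [f [g [Hgf _]]]. exists f. intros x y E.
  rewrite <- (Hgf x), <- (Hgf y), E. reflexivity.
Qed.

Definition image {A B} (F : A -> B) (P : A -> Prop) (y : B) : Prop :=
  exists x, P x /\ y = F x.

Lemma card_le_image {A B} (F : A -> B) (P : A -> Prop) :
  card_le {y | image F P y} {x | P x}.
Proof.
  destruct (choice (fun (y : {y | image F P y}) (x : {x | P x}) =>
                      proj1_sig y = F (proj1_sig x))) as [pre Hpre].
  { intros [y [x [Px ->]]]. exists (exist P x Px). reflexivity. }
  exists pre. intros y y' E. apply sig_eq. rewrite (Hpre y), (Hpre y'), E. reflexivity.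
Qed.

Lemma card_eq_of_bijective {A B} (h : A -> B) :
  injective h -> (forall b, exists a, h a = b) -> card_eq A B.
Proof.
  intros Hinj Hsurj. destruct (choice _ Hsurj) as [h' Hh'].
  exists h, h'. split; [|exact Hh']. intros a. apply Hinj, Hh'.
Qed.

Section SchroederBernstein.
Variables (A B : Type) (f : A -> B) (g : B -> A).

(* The points of A reachable by iterating [g \o f] from a point outside the range of g;
   there the bijection is f, elsewhere it is the inverse of g. *)
Definition sb_chain (a : A) : Prop :=
  exists n a0, (~ exists b, g b = a0) /\ a = Nat.iter n (fun x => g (f x)) a0.

Lemma sb_chain_step a : sb_chain a -> sb_chain (g (f a)).
Proof. intros [n [a0 [Ha0 ->]]]. exists (S n), a0. auto. Qed.

Lemma sb_not_chain_in_range a : ~ sb_chain a -> exists b, g b = a.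
Proof. intros H. apply NNPP. intros H1. apply H. exists 0, a. auto. Qed.

Definition sb_map (a : A) : B :=
  match excluded_middle_informative (sb_chain a) with
  | left _ => f a
  | right nC => proj1_sig (constructive_indefinite_description _ (sb_not_chain_in_range a nC))
  end.

Lemma sb_map_chain a : sb_chain a -> sb_map a = f a.
Proof.
  intros H. unfold sb_map. destruct (excluded_middle_informative _); [reflexivity|contradiction].
Qed.

Lemma sb_map_not_chain a : ~ sb_chain a -> g (sb_map a) = a.
Proof.
  intros H. unfold sb_map. destruct (excluded_middle_informative _) as [C|C]; [contradiction|].
  destruct (constructive_indefinite_description _ _) as [b Hb]. exact Hb.
Qed.

Lemma sb_map_injective : injective f -> injective sb_map.
Proof.
  intros Hf.
  assert (mixed : forall x y, sb_chain x -> ~ sb_chain y -> sb_map x <> sb_map y).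
  { intros x y Cx Cy E. apply Cy.
    rewrite <- (sb_map_not_chain y Cy), <- E, (sb_map_chain x Cx). exact (sb_chain_step x Cx). }
  intros x y E.
  destruct (classic (sb_chain x)) as [Cx|Cx]; destruct (classic (sb_chain y)) as [Cy|Cy].
  - apply Hf. rewrite <- (sb_map_chain x Cx), <- (sb_map_chain y Cy). exact E.
  - exfalso. exact (mixed x y Cx Cy E).
  - exfalso. exact (mixed y x Cy Cx (eq_sym E)).
  - rewrite <- (sb_map_not_chain x Cx), <- (sb_map_not_chain y Cy), E. reflexivity.
Qed.

Lemma sb_map_surjective : injective g -> forall b, exists a, sb_map a = b.
Proof.
  intros Hg b. destruct (classic (sb_chain (g b))) as [C|C].
  - destruct C as [[|n] [a0 [Ha0 Hb]]].
    + exfalso. apply Ha0. exists b. exact Hb.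
    + apply Hg in Hb. exists (Nat.iter n (fun x => g (f x)) a0).
      rewrite sb_map_chain; [symmetry; exact Hb|]. exists n, a0. auto.
  - exists (g b). apply Hg, sb_map_not_chain, C.
Qed.

End SchroederBernstein.

Lemma card_le_antisym A B : card_le A B -> card_le B A -> card_eq A B.
Proof.
  intros [f Hf] [g Hg].
  exact (card_eq_of_bijective _ (sb_map_injective _ _ f g Hf) (sb_map_surjective _ _ f g Hg)).
Qed.

Lemma small_subset {M} (A B : M -> Prop) : (forall b, A b -> B b) -> small B -> small A.
Proof.
  intros H HB [f Hf]. apply HB.
  exists (fun m => exist B (proj1_sig (f m)) (H _ (proj2_sig (f m)))).
  intros x y E. apply Hf, sig_eq. exact (f_equal (@proj1_sig _ _) E).
Qed.

Lemma lt_leo_trans {A} (lt : A -> A -> Prop) x y z :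
  (forall x y z, lt x y -> lt y z -> lt x z) -> lt x y -> leo lt y z -> lt x z.
Proof. intros Tr H [H2| <-]; eauto. Qed.

Lemma leo_lt_trans {A} (lt : A -> A -> Prop) x y z :
  (forall x y z, lt x y -> lt y z -> lt x z) -> leo lt x y -> lt y z -> lt x z.
Proof. intros Tr [H| ->] H2; eauto. Qed.

Lemma well_founded_least {A} (R : A -> A -> Prop) (P : A -> Prop) a :
  well_founded R -> P a -> exists m, P m /\ forall y, R y m -> ~ P y.
Proof.
  intros W Pa. apply NNPP. intro H. revert Pa.
  induction a as [a IH] using (well_founded_ind W). intros Pa. apply H.
  exists a. split; [exact Pa|]. intros y Ry Py. exact (IH y Ry Py).
Qed.

Section InfiniteTypes.
Variable M : Type.

Lemma injective_seq_from (x : M) :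
  card_le nat M -> exists b : nat -> M, injective b /\ b 0 = x.
Proof.
  intros [a Ha]. destruct (classic (exists k, x = a k)) as [[k ->]|Nk].
  - exists (fun n => a (n + k)). split; [|reflexivity].
    intros n m E. apply Ha in E. apply (PeanoNat.Nat.add_cancel_r _ _ k), E.
  - exists (fun n => match n with 0 => x | S n => a n end). split; [|reflexivity].
    intros [|n] [|m] E; auto.
    + exfalso. apply Nk. exists m. exact E.
    + exfalso. apply Nk. exists n. symmetry. exact E.
Qed.

(* Hilbert's hotel: move every b n to b (S n). *)
Definition shift (b : nat -> M) (y : M) : M :=
  match excluded_middle_informative (exists n, y = b n) with
  | left H => b (S (proj1_sig (constructive_indefinite_description _ H)))
  | right _ => y
  end.

Lemma shift_cases (b : nat -> M) y :
  (exists n, y = b n /\ shift b y = b (S n)) \/ ((~ exists n, y = b n) /\ shift b y = y).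
Proof.
  unfold shift. destruct (excluded_middle_informative _) as [H|H]; [left|right; auto].
  destruct (constructive_indefinite_description _ H) as [n Hn]. exists n. auto.
Qed.

Lemma shift_injective (b : nat -> M) : injective b -> injective (shift b).
Proof.
  intros Hb x y E.
  destruct (shift_cases b x) as [[n [Hx Ex]]|[Nx Ex]];
  destruct (shift_cases b y) as [[m [Hy Ey]]|[Ny Ey]]; rewrite Ex, Ey in E.
  - apply Hb in E. injection E as ->. congruence.
  - exfalso. apply Ny. exists (S n). auto.
  - exfalso. apply Nx. exists (S m). auto.
  - exact E.
Qed.

Lemma shift_neq_0 (b : nat -> M) y : injective b -> shift b y <> b 0.
Proof.
  intros Hb E. destruct (shift_cases b y) as [[n [_ Ey]]|[Ny Ey]]; rewrite Ey in E.
  - apply Hb in E. discriminate.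
  - apply Ny. exists 0. exact E.
Qed.

Lemma card_le_remove_point (x : M) : card_le nat M -> card_le M {y | y <> x}.
Proof.
  intros Hinf. destruct (injective_seq_from x Hinf) as [b [Hb <-]].
  exists (fun y => exist _ (shift b y) (shift_neq_0 b y Hb)).
  intros y z E. exact (shift_injective b Hb _ _ (f_equal (@proj1_sig _ _) E)).
Qed.

Lemma cardinal_no_maximum (ltM : M -> M -> Prop) :
  is_cardinal ltM -> card_le nat M -> forall x, exists y, ltM x y.
Proof.
  intros [[_ [_ [_ Tri]]] Hinit] Hinf x. apply NNPP. intro Hmax.
  assert (below : forall y, y <> x -> ltM y x).
  { intros y Hy. destruct (Tri y x) as [h|[h|h]]; [exact h|contradiction|].
    exfalso. apply Hmax. exists y. exact h. }
  apply (Hinit x). eapply card_le_trans; [apply (card_le_remove_point x Hinf)|].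
  exists (fun y => exist (fun z => ltM z x) (proj1_sig y) (below _ (proj2_sig y))).
  intros y z E. apply sig_eq. exact (f_equal (@proj1_sig _ _) E).
Qed.

End InfiniteTypes.

Section MonotoneMajorant.
Variables (M : Type) (ltM : M -> M -> Prop) (T : Type) (ltT : T -> T -> Prop).
Hypotheses (HM : well_order ltM) (TrT : forall i j k, ltT i j -> ltT j k -> ltT i k).

Lemma monotone_majorant (e : T -> M) :
  (forall i, exists m0, forall j, ltT j i -> ltM (e j) m0) ->
  exists nu : T -> M, (forall i k, leo ltT i k -> leo ltM (nu i) (nu k)) /\
                      (forall i, leo ltM (e i) (nu i)).
Proof.
  destruct HM as [W [_ [Tr Tri]]]. intros Hbd.
  set (P := fun i m => (forall j, ltT j i -> ltM (e j) m) /\ leo ltM (e i) m).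
  assert (Hleast : forall i, exists m, P i m /\ forall y, ltM y m -> ~ P i y).
  { intros i. destruct (Hbd i) as [m0 Hm0].
    destruct (Tri m0 (e i)) as [h|[h|h]].
    - apply (well_founded_least ltM (P i) (e i) W).
      split; [|right; reflexivity]. intros j Hj. eauto.
    - apply (well_founded_least ltM (P i) m0 W). split; [exact Hm0|right; symmetry; exact h].
    - apply (well_founded_least ltM (P i) m0 W). split; [exact Hm0|left; exact h]. }
  destruct (choice _ Hleast) as [nu Hnu].
  exists nu. split.
  - intros i k [Hik| <-]; [|right; reflexivity].
    assert (Pk : P i (nu k)).
    { destruct (Hnu k) as [[H1 _] _]. split.
      - intros j Hj. apply H1. eauto.
      - left. apply H1, Hik. }
    destruct (Tri (nu i) (nu k)) as [h|[h|h]]; [left; exact h|right; exact h|].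
    exfalso. exact (proj2 (Hnu i) _ h Pk).
  - intros i. exact (proj2 (proj1 (Hnu i))).
Qed.

End MonotoneMajorant.

Section CofinalSequence.
Variables (M : Type) (ltM : M -> M -> Prop) (T : Type) (ltT : T -> T -> Prop).
Hypotheses (HM : is_cardinal ltM) (HT : is_cardinal ltT) (Hsing : singular_with_cof ltM T).

Lemma cofinal_enumeration : exists e : T -> M, forall m, exists i, leo ltM m (e i).
Proof.
  destruct Hsing as [_ [[[X [HX [p [q [Hpq _]]]]] _] _]].
  exists (fun i => proj1_sig (q i)). intros m.
  destruct (HX m) as [x [Xx Hx]]. exists (p (exist _ x Xx)). rewrite Hpq. exact Hx.
Qed.

(* An unbounded prefix {e j | j < i} would be a cofinal set of size |i| < cf(mu). *)
Lemma enumeration_prefix_bounded (e : T -> M) i :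
  exists m0, forall j, ltT j i -> ltM (e j) m0.
Proof.
  destruct HM as [[_ [_ [_ Tri]]] _]. destruct HT as [_ Hinit].
  destruct Hsing as [_ [[_ Hcof] _]].
  apply NNPP. intro Hunb.
  assert (Hcofinal : cofinal ltM (image e (fun j => ltT j i))).
  { intros m. apply NNPP. intro Hm. apply Hunb. exists m. intros j Hj.
    destruct (Tri (e j) m) as [h|[h|h]]; [exact h| |];
      exfalso; apply Hm; exists (e j); (split; [exists j; auto|]); unfold leo; auto. }
  apply (Hinit i). eapply card_le_trans; [apply (Hcof _ Hcofinal)|apply card_le_image].
Qed.

Lemma monotone_cofinal_sequence :
  exists nu : T -> M, (forall i k, leo ltT i k -> leo ltM (nu i) (nu k)) /\
                      (forall x, exists i, ltM x (nu i)).
Proof.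
  pose proof (cardinal_no_maximum M ltM HM (proj1 Hsing)) as Hnomax.
  destruct HM as [[_ [_ [Tr _]]] _]. destruct HT as [[_ [_ [TrT _]]] _].
  destruct cofinal_enumeration as [e He].
  destruct (monotone_majorant M ltM T ltT (proj1 HM) TrT e (enumeration_prefix_bounded e))
    as [nu [Hmono Hmaj]].
  exists nu. split; [exact Hmono|]. intros x.
  destruct (Hnomax x) as [y Hy]. destruct (He y) as [i Hi]. exists i.
  apply (lt_leo_trans ltM x y _ Tr Hy).
  destruct Hi as [Hi| ->]; [left; exact (lt_leo_trans ltM _ _ _ Tr Hi (Hmaj i))|exact (Hmaj i)].
Qed.

End CofinalSequence.

Section Transfer.
Variables (M : Type) (ltM : M -> M -> Prop) (T : Type) (ltT : T -> T -> Prop).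
Variables (nu : T -> M) (c : M -> T).
Hypotheses (IrrM : forall x, ~ ltM x x) (TrM : forall x y z, ltM x y -> ltM y z -> ltM x z)
  (TriT : forall i j, ltT i j \/ i = j \/ ltT j i).
Hypotheses (Hmono : forall i k, leo ltT i k -> leo ltM (nu i) (nu k))
  (Hc : forall x, ltM x (nu (c x))).

Lemma dominating_mu_image_nu (Ds : (M -> T) -> Prop) :
  dominating_star ltT Ds -> dominating_mu ltM (image (fun g b => nu (g b)) Ds).
Proof.
  intros HDs f. destruct (HDs (fun b => c (f b))) as [g [Dg Hlt]].
  exists (fun b => nu (g b)). split; [exists g; auto|].
  eapply small_subset; [|exact Hlt]. intros b Hb; simpl in Hb.
  destruct (TriT (g b) (c (f b))) as [h|[h|h]]; [left; exact h|right; exact h|].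
  exfalso. apply (IrrM (f b)).
  apply (lt_leo_trans ltM _ (nu (c (f b))) _ TrM (Hc (f b))).
  left. apply (leo_lt_trans ltM _ (nu (g b)) _ TrM); [apply Hmono; left; exact h|exact Hb].
Qed.

Lemma dominating_star_image_c (D : (M -> M) -> Prop) :
  dominating_mu ltM D -> dominating_star ltT (image (fun g b => c (g b)) D).
Proof.
  intros HD h. destruct (HD (fun b => nu (h b))) as [g [Dg Hle]].
  exists (fun b => c (g b)). split; [exists g; auto|].
  eapply small_subset; [|exact Hle]. intros b Hb; simpl in Hb.
  exact (lt_leo_trans ltM _ (nu (c (g b))) _ TrM (Hc (g b)) (Hmono _ _ Hb)).
Qed.

End Transfer.

Theorem lemma3p1 (M : Type) (ltM : M -> M -> Prop) (T : Type) (ltT : T -> T -> Prop)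
  (K : Type) :
  is_cardinal ltM -> is_cardinal ltT -> singular_with_cof ltM T ->
  d_star_is (M := M) ltT K -> d_mu_is ltM K.
Proof.
  intros HM HT Hsing [[Ds [HDs HeqDs]] Hmin].
  destruct (monotone_cofinal_sequence M ltM T ltT HM HT Hsing) as [nu [Hmono Hunb]].
  destruct (choice _ Hunb) as [c Hc].
  destruct HM as [[_ [IrrM [TrM _]]] _]. destruct HT as [[_ [_ [_ TriT]]] _].
  assert (lower : forall D, dominating_mu ltM D -> card_le K {x | D x}).
  { intros D HD. apply card_le_trans with {h | image (fun g b => c (g b)) D h}.
    - apply Hmin, (dominating_star_image_c M ltM T ltT nu c TrM Hmono Hc), HD.
    - apply card_le_image. }
  pose proof (dominating_mu_image_nu M ltM T ltT nu c IrrM TrM TriT Hmono Hc Ds HDs) as HD'.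
  split; [|exact lower].
  eexists. split; [exact HD'|]. apply card_le_antisym.
  - eapply card_le_trans; [apply card_le_image|apply card_le_of_card_eq, HeqDs].
  - exact (lower _ HD').
Qed.
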